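(* There is an absolute constant $C$ such that the following holds. Let $G=(V,E)$ be an undirected unweighted graph on $n$ vertices, let $D\ge1$ be an integer, and let $\chi:V\to[1,D^3]$ be any coloring. For vertices $u,v$ let $H_{uv}=\{x\in V:\mathrm{dist}(u,x)+\mathrm{dist}(x,v)=\mathrm{dist}(u,v)\}$. For integers $a,b\ge0$ with $1\le a+b\le D$ and $h\in V$, let $E^h_{a,b}$ be the edge set of the bipartite graph with two copies of $V$ as sides, where $(u,v)\in E^h_{a,b}$ ($u$ in the left copy, $v$ in the right copy) iff (i) $|H_{uv}|\le D$, (ii) the vertices of $H_{uv}$ receive pairwise distinct colors under $\chi$, and (iii) $h\in H_{uv}$, $\mathrm{dist}(u,h)=a$ and $\mathrm{dist}(h,v)=b$. For each such $(a,b,h)$ fix a minimum vertex cover $(V^{h}_{1,a,b},V^{h}_{2,a,b})$ of this bipartite graph ($V^h_{1,a,b}$ in the left copy, $V^h_{2,a,b}$ in the right copy), and define for each $v\in V$ the set $F_v$ of all $h\in V$ such that $v\in V^h_{1,a,b}\cup V^h_{2,a,b}$ for some $a,b$ with $1\le a+b\le D$. Then $$\sum_{v\in V}|F_v|\le C\,D^5\,\frac{n^2}{\mathsf{RS}(n)}.$$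
   Context: A matching $M$ in a graph is induced if there is a vertex subset $V'$ such that $M$ is exactly the edge set of the subgraph induced by $V'$. A Ruzsa–Szemerédi graph is an undirected unweighted graph on $n$ vertices whose edges can be partitioned into at most $n$ induced matchings; $\mathsf{RS}(n)$ is the largest value such that every Ruzsa–Szemerédi graph on $n$ vertices has at most $n^2/\mathsf{RS}(n)$ edges. *)

From HB Require Import structures.
From mathcomp Require Import all_boot all_order all_algebra.
Set Implicit Arguments. Unset Strict Implicit. Unset Printing Implicit Defensive.
Import Order.TTheory GRing.Theory Num.Theory.

Section Dist.
Variables (T : finType) (e : rel T).

Definition walk_len (u v : T) (k : nat) : bool :=
  [exists p : k.-tuple T, path e u p && (last u p == v)].

(* shortest-path distance; None encodes infinity (no path).
   A shortest walk has fewer than #|T| edges. *)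
Definition dist (u v : T) : option nat :=
  let k := find (walk_len u v) (iota 0 #|T|) in
  if k < #|T| then Some k else None.

Definition oadd (x y : option nat) : option nat :=
  match x, y with Some a, Some b => Some (a + b) | _, _ => None end.

Definition Hset (u v : T) : {set T} :=
  [set x | oadd (dist u x) (dist x v) == dist u v].

(* bipartite edge set E^h_{a,b}, u in left copy, v in right copy *)
Definition Eab (D : nat) (chi : T -> nat) (a b : nat) (h : T) (u v : T) : bool :=
  [&& #|Hset u v| <= D,
      [forall x in Hset u v, forall y in Hset u v, (chi x == chi y) ==> (x == y)],
      h \in Hset u v, dist u h == Some a & dist h v == Some b].

Definition is_vcover (E : T -> T -> bool) (C : {set T} * {set T}) : bool :=
  [forall u, forall v, E u v ==> ((u \in C.1) || (v \in C.2))].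

Definition is_min_vcover (E : T -> T -> bool) (C : {set T} * {set T}) : Prop :=
  is_vcover E C /\
  forall C' : {set T} * {set T}, is_vcover E C' -> #|C.1| + #|C.2| <= #|C'.1| + #|C'.2|.

Definition Fset (D : nat) (cover : nat -> nat -> T -> {set T} * {set T}) (v : T)
  : {set T} :=
  [set h | [exists a : 'I_D.+1, exists b : 'I_D.+1,
             (1 <= a + b <= D) && (v \in (cover a b h).1 :|: (cover a b h).2)]].
End Dist.

(* A simple graph on vertex set 'I_n is given by its edge set E, a set of
   2-element subsets of 'I_n. *)
Definition is_matching n (M : {set {set 'I_n}}) : bool :=
  [forall f in M, forall g in M, (f != g) ==> [disjoint f & g]].

Definition is_induced_matching n (E M : {set {set 'I_n}}) : bool :=
  is_matching M && [exists V' : {set 'I_n}, M == [set f in E | f \subset V']].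

(* E can be partitioned into at most n induced matchings (empty classes allowed) *)
Definition is_RS_graph n (E : {set {set 'I_n}}) : bool :=
  [forall f in E, #|f| == 2] &&
  [exists Ms : {ffun 'I_n -> {set {set 'I_n}}},
     [&& [forall i, is_induced_matching E (Ms i)],
         E == \bigcup_i Ms i &
         [forall i, forall j, (i != j) ==> [disjoint Ms i & Ms j]]]].

Definition rs_max (n : nat) : nat :=
  \max_(E : {set {set 'I_n}} | is_RS_graph E) #|E|.

(* RS(n): the largest value such that every RS graph on n vertices has at most
   n^2/RS(n) edges, i.e. RS(n) = n^2 / rs_max n. *)
Definition RS (n : nat) : rat := (n ^ 2)%:R / (rs_max n)%:R.

(* A minimum vertex cover of a
   bipartite graph has at most twice as many vertices as a maximum matching
   has edges, so sum_v |F_v| is at most twice the sum, over admissible (a, b)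
   and all centres h, of the size of a maximum matching M_h of E^h_{a,b}.
   Fix (a, b) and a colour c.  If (u, v) and (u', v') lie in M_h and (u, v')
   lies in M_h', then h is on a shortest u-v' path, and since the colours on
   H_{uv'} are distinct, h' = h whenever h and h' both have colour c.  So the
   matchings M_h with chi h = c form an "induced" family.  Orienting along a
   cut S of T (pairs from S to its complement) turns such a family into an
   RS graph on #|T| vertices whose induced matchings are the M_h; averaging
   over all 2^n cuts, each pair survives in a quarter of them, so the family
   has at most 4 rs_max(n) pairs.  Summing over the D^3 + 1 colours and the
   (D + 1)^2 pairs (a, b) gives the bound 64 D^5 rs_max(n), and for n > 0 the
   quantity rs_max(n) is exactly n^2 / RS(n). *)

From HB Require Import structures.
From mathcomp Require Import all_boot all_order all_algebra.
From mathcomp Require Import zify.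

Set Implicit Arguments. Unset Strict Implicit. Unset Printing Implicit Defensive.

Section Counting.
Variable T : finType.

Lemma exists_le_count (P : pred T) : [exists x, P x] <= \sum_x P x.
Proof. by case: existsP => [[x Px]|] //; rewrite (bigD1 x) //= Px. Qed.

Lemma card_count (P : pred T) : #|[set x | P x]| = \sum_x P x.
Proof. by rewrite -sum1dep_card big_mkcond; apply: eq_bigr => x _; case: (P x). Qed.

Lemma card_set_count (A : {set T}) (P : pred T) :
  #|[set x in A | P x]| = \sum_(x in A) P x.
Proof.
rewrite -sum1_card big_mkcond [RHS]big_mkcond; apply: eq_bigr => x _.
by rewrite !inE; case: (x \in A); case: (P x).
Qed.

(* Exactly 2^(n-2) subsets of an n-element type contain x and avoid y <> x:
   they are the sets x |: A with A avoiding both x and y. *)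
Lemma card_sets_separating (x y : T) : x != y ->
  #|[set S : {set T} | (x \in S) && (y \notin S)]| = 2 ^ (#|T| - 2).
Proof.
move=> xy; set B := ~: [set x; y].
have -> : [set S : {set T} | (x \in S) && (y \notin S)] =
          (fun A => x |: A) @: powerset B.
  apply/setP => S; rewrite inE; apply/andP/imsetP => [[xS yS]|[A]].
    exists (S :\: [set x; y]); first by rewrite powersetE setDE setIC subsetIl.
    apply/setP => z; rewrite !inE; case: (eqVneq z x) => [->|zx] //=.
    by case: (eqVneq z y) => [->|]; rewrite ?(negbTE yS).
  rewrite powersetE => /subsetP sAB ->; split; first exact: setU11.
  rewrite !inE negb_or eq_sym xy; apply/negP => /sAB.
  by rewrite !inE eqxx orbT.
rewrite card_in_imset ?card_powerset; first by rewrite cardsCs setCK cards2 xy.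
apply: (can_in_inj (g := fun S => S :\ x)) => A; rewrite powersetE => sAB.
by apply: setU1K; apply/negP => /(subsetP sAB); rewrite !inE eqxx.
Qed.

End Counting.

Section BipartiteMatching.
(* A bipartite graph with two copies of T as sides, given by its relation R
   (left end first). *)
Variables (T : finType) (R : T -> T -> bool).

Definition is_bmatching (M : {set T * T}) : bool :=
  [forall p in M, R p.1 p.2] &&
  [forall p in M, forall q in M, ((p.1 == q.1) || (p.2 == q.2)) ==> (p == q)].

Lemma bmatching_edge M p : is_bmatching M -> p \in M -> R p.1 p.2.
Proof. by case/andP => /forall_inP/(_ p). Qed.

Lemma bmatching_inj M p q : is_bmatching M -> p \in M -> q \in M ->
  p.1 = q.1 \/ p.2 = q.2 -> p = q.
Proof.
case/andP => _ /forall_inP Minj pM qM ends; apply/eqP.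
by apply: (implyP (forall_inP (Minj p pM) q qM)); case: ends => ->; rewrite eqxx ?orbT.
Qed.

Lemma bmatching_extend M u v : is_bmatching M -> R u v ->
  u \notin [set p.1 | p in M] -> v \notin [set p.2 | p in M] ->
  is_bmatching ((u, v) |: M).
Proof.
move=> Mm Ruv uM vM.
have fresh p : p \in M -> (u == p.1) || (v == p.2) = false.
  move=> pM; apply/norP; split; apply/eqP => end_eq;
    [move/negP: uM|move/negP: vM]; apply; apply/imsetP; by exists p.
rewrite /is_bmatching; apply/andP; split; apply/forall_inP => p; rewrite !inE => /orP[/eqP->|pM].
- by [].
- exact: bmatching_edge Mm pM.
- by apply/forall_inP => q; rewrite !inE => /orP[/eqP->|/fresh->]; rewrite ?eqxx.
apply/forall_inP => q; rewrite !inE => /orP[/eqP->|qM].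
  by rewrite [p.1 == _]eq_sym [p.2 == _]eq_sym fresh.
by apply/implyP => /orP[]/eqP ends; apply/eqP/(bmatching_inj Mm pM qM); tauto.
Qed.

Definition max_bmatching : {set T * T} :=
  [arg max_(M > set0 | is_bmatching M) #|M|].

(* The empty matching witnesses that a maximum matching exists. *)
Lemma bmatching_set0 : is_bmatching set0.
Proof. by rewrite /is_bmatching; apply/andP; split; apply/forall_inP => p; rewrite inE. Qed.

Lemma max_bmatchingP : is_bmatching max_bmatching.
Proof. by rewrite /max_bmatching; case: arg_maxnP; first exact: bmatching_set0. Qed.

Lemma max_bmatching_cover :
  is_vcover R ([set p.1 | p in max_bmatching], [set p.2 | p in max_bmatching]).
Proof.
rewrite /max_bmatching; case: arg_maxnP; first exact: bmatching_set0.
move=> M Mm Mmax; apply/forallP => u; apply/forallP => v; apply/implyP => Ruv.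
apply/negPn/negP => /norP[uM vM].
have uvM : (u, v) \notin M by apply: contra uM => uvM; apply/imsetP; exists (u, v).
by have := Mmax _ (bmatching_extend Mm Ruv uM vM); rewrite /geq cardsU1 uvM /= add1n ltnn.
Qed.

Lemma min_vcover_le_matching C :
  is_min_vcover R C -> #|C.1| + #|C.2| <= 2 * #|max_bmatching|.
Proof.
case=> _ /(_ _ max_bmatching_cover) /leq_trans; apply.
by rewrite mul2n -addnn leq_add // leq_imset_card.
Qed.

End BipartiteMatching.

Lemma card_RS_graph_le n (E : {set {set 'I_n}}) : is_RS_graph E -> #|E| <= rs_max n.
Proof. exact: leq_bigmax_cond. Qed.

Section InducedMatchingFamily.
Variables (T : finType) (M : T -> {set T * T}).

Hypothesis matchingM : forall h p q, p \in M h -> q \in M h ->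
  p.1 = q.1 \/ p.2 = q.2 -> p = q.
(* inducedness: a pair joining the left end of an edge of M h to the right
   end of an edge of M h belongs to no other member of the family *)
Hypothesis inducedM : forall h h' p q r, p \in M h -> q \in M h -> r \in M h' ->
  r.1 = p.1 -> r.2 = q.2 -> h' = h.
Hypothesis looplessM : forall h p, p \in M h -> p.1 != p.2.

Section Cut.
(* The pairs crossing a cut S from left to right determine, after forgetting
   the orientation, an RS graph on 'I_#|T| (identified with T by enum_rank). *)
Variable S : {set T}.

Definition crossing (p : T * T) : bool := (p.1 \in S) && (p.2 \notin S).

Definition cut_matching (h : T) : {set T * T} := [set p in M h | crossing p].

Definition edge_of (p : T * T) : {set 'I_#|T|} := [set enum_rank p.1; enum_rank p.2].

Lemma edge_of_inj p q : crossing p -> crossing q -> edge_of p = edge_of q -> p = q.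
Proof.
case: p q => [p1 p2] [q1 q2] /andP[/= p1S p2S] /andP[/= q1S q2S] pq.
have : enum_rank p1 \in edge_of (q1, q2) by rewrite -pq !inE eqxx.
have : enum_rank p2 \in edge_of (q1, q2) by rewrite -pq !inE eqxx orbT.
rewrite !inE !(inj_eq enum_rank_inj) /=.
case/orP=> /eqP e2; first by rewrite e2 q1S in p2S.
case/orP=> /eqP e1; last by rewrite e1 in p1S; rewrite p1S in q2S.
by rewrite e1 e2.
Qed.

Definition cut_classes : {ffun 'I_#|T| -> {set {set 'I_#|T|}}} :=
  [ffun i => edge_of @: cut_matching (enum_val i)].

Definition cut_graph : {set {set 'I_#|T|}} := \bigcup_i cut_classes i.

Lemma mem_cut_classes i f :
  reflect (exists2 p, p \in cut_matching (enum_val i) & f = edge_of p)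
          (f \in cut_classes i).
Proof. by rewrite ffunE; apply: imsetP. Qed.

Lemma mem_cut_matching h p : p \in cut_matching h = (p \in M h) && crossing p.
Proof. by rewrite inE. Qed.

(* Distinct centres have disjoint classes: by inducedness (with p = q = r)
   a pair lies in at most one member of the family. *)
Lemma cut_classes_disjoint i j : i != j -> [disjoint cut_classes i & cut_classes j].
Proof.
move=> ij; rewrite -setI_eq0; apply/eqP/setP => f; rewrite !inE.
apply/andP => -[/mem_cut_classes[p] /[!mem_cut_matching] /andP[pM pS] ->].
case/mem_cut_classes=> q /[!mem_cut_matching] /andP[qM qS] /edge_of_inj eq_pq.
rewrite -(eq_pq pS qS) in qM.
by move/negP: ij; apply; apply/eqP/enum_val_inj/esym/(inducedM pM pM qM).
Qed.

(* Each class is a matching of the undirected graph: two of its edges can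
   only meet left end to left end or right end to right end, which the
   matching property of M h forbids. *)
Lemma cut_class_matching i : is_matching (cut_classes i).
Proof.
apply/forall_inP => f /mem_cut_classes[p /[!mem_cut_matching] /andP[pM /andP[p1S p2S]] ->].
apply/forall_inP => g /mem_cut_classes[q /[!mem_cut_matching] /andP[qM /andP[q1S q2S]] ->].
apply/implyP => fg; rewrite -setI_eq0; apply/eqP/setP => x; rewrite !inE.
have pq : p <> q by move=> eq_pq; rewrite eq_pq eqxx in fg.
apply/negP => /andP[] /orP[] /eqP -> /orP[] /eqP /enum_rank_inj e.
- by apply: pq; apply: matchingM pM qM _; left.
- by rewrite -e p1S in q2S.
- by rewrite e q1S in p2S.
- by apply: pq; apply: matchingM pM qM _; right.
Qed.

Lemma mem_cut_graph f :
  f \in cut_graph -> exists i : 'I_#|T|, exists2 p, p \in cut_matching (enum_val i) & f = edge_of p.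
Proof. by case/bigcupP=> i _ /mem_cut_classes; exists i. Qed.

Lemma mem_class_vertices i x :
  enum_rank x \in \bigcup_(f in cut_classes i) f ->
  exists2 p, p \in cut_matching (enum_val i) & p.1 = x \/ p.2 = x.
Proof.
case/bigcupP=> _ /mem_cut_classes[p pM ->]; rewrite !inE !(inj_eq enum_rank_inj).
by case/orP=> /eqP->; exists p => //; [left|right].
Qed.

(* Each class is the subgraph of the cut graph induced by its own vertex set:
   an edge r joining the left end of p and the right end of q, with p and q
   in the class of h, lies in the class of h by inducedness. *)
Lemma cut_class_induced i : is_induced_matching cut_graph (cut_classes i).
Proof.
rewrite /is_induced_matching cut_class_matching /=.
apply/existsP; exists (\bigcup_(f in cut_classes i) f); apply/eqP/setP => f.
rewrite inE; apply/idP/andP => [fi|[fE /subsetP fsub]].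
  split; first by apply/bigcupP; exists i.
  by apply/subsetP => x xf; apply/bigcupP; exists f.
have [j [r /[!mem_cut_matching] /andP[rM /andP[r1S r2S]] def_f]] := mem_cut_graph fE.
have /mem_class_vertices[p /[!mem_cut_matching] /andP[pM /andP[p1S p2S]] e1] :
  enum_rank r.1 \in \bigcup_(f in cut_classes i) f by apply: fsub; rewrite def_f !inE eqxx.
have /mem_class_vertices[q /[!mem_cut_matching] /andP[qM /andP[q1S q2S]] e2] :
  enum_rank r.2 \in \bigcup_(f in cut_classes i) f by apply: fsub; rewrite def_f !inE eqxx orbT.
have {e1} e1 : r.1 = p.1 by case: e1 => [//|e]; rewrite e r1S in p2S.
have {e2} e2 : r.2 = q.2 by case: e2 => [e|//]; rewrite -e q1S in r2S.
have rMi : r \in M (enum_val i) by rewrite -(inducedM pM qM rM e1 e2).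
by rewrite def_f; apply/mem_cut_classes; exists r; rewrite // mem_cut_matching rMi /crossing r1S.
Qed.

Lemma cut_graph_RS : is_RS_graph cut_graph.
Proof.
apply/andP; split.
  apply/forall_inP => f /mem_cut_graph[i [p /[!mem_cut_matching] /andP[_ /andP[p1S p2S]] ->]].
  suff p12 : p.1 != p.2 by rewrite cards2 (inj_eq enum_rank_inj) p12.
  by apply: contraNneq p2S => <-.
apply/existsP; exists cut_classes; apply/and3P; split => //.
  by apply/forallP => i; apply: cut_class_induced.
apply/forallP => i; apply/forallP => j; apply/implyP; exact: cut_classes_disjoint.
Qed.

Lemma sum_cut_matching_le : \sum_h #|cut_matching h| <= rs_max #|T|.
Proof.
apply: leq_trans (card_RS_graph_le cut_graph_RS).
rewrite -sum1_card partition_disjoint_bigcup; last exact: cut_classes_disjoint.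
rewrite (reindex (@enum_val T T)) /=; last first.
  by exists (@enum_rank T) => x _; [apply: enum_valK | apply: enum_rankK].
apply: eq_leq; apply: eq_bigr => i _; rewrite sum1_card ffunE card_in_imset //.
move=> p q /[!mem_cut_matching] /andP[_ pS] /andP[_ qS]; exact: edge_of_inj.
Qed.

End Cut.

(* Each loopless pair crosses exactly 2^(n-2) of the 2^n cuts. *)
Lemma sum_over_cuts :
  \sum_(S : {set T}) \sum_h #|cut_matching S h| = (\sum_h #|M h|) * 2 ^ (#|T| - 2).
Proof.
rewrite exchange_big big_distrl /=; apply: eq_bigr => h _.
under eq_bigr do rewrite card_set_count.
rewrite exchange_big /= -sum_nat_const; apply: eq_bigr => p pM.
by rewrite -[RHS](card_sets_separating (looplessM pM)) card_count.
Qed.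

(* Averaging over all cuts: the family has at most 4 rs_max(n) pairs in total. *)
Lemma matching_family_le_rs : \sum_h #|M h| <= 4 * rs_max #|T|.
Proof.
have all_cuts : (\sum_h #|M h|) * 2 ^ (#|T| - 2) <= 2 ^ #|T| * rs_max #|T|.
  have card_cuts : #|{set T}| = 2 ^ #|T|.
    by have := card_powerset [set: T]; rewrite powersetT !cardsT.
  rewrite -sum_over_cuts -card_cuts -sum_nat_const.
  by apply: leq_sum => S _; apply: sum_cut_matching_le.
have pow_le : 2 ^ #|T| <= 4 * 2 ^ (#|T| - 2).
  by rewrite -(expnD 2 2) leq_pexp2l // -leq_subLR.
rewrite -(leq_pmul2r (expn_gt0 2 (#|T| - 2))) mulnAC.
exact: leq_trans all_cuts (leq_mul pow_le (leqnn _)).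
Qed.

End InducedMatchingFamily.

Section ShortestPathEdges.
Variables (T : finType) (e : rel T) (D : nat) (chi : T -> nat).
Let E := Eab e D chi.

Lemma dist_refl u : dist e u u = Some 0.
Proof.
have walk0 : walk_len e u u 0 by apply/existsP; exists [tuple]; rewrite /= eqxx.
rewrite /dist; have : 0 < #|T| by apply/card_gt0P; exists u.
by case: #|T| => //= n _; rewrite walk0.
Qed.

Lemma Eab_dist a b h u v : E a b h u v -> dist e u v = Some (a + b).
Proof. by case/and5P => _ _ + /eqP da /eqP db; rewrite inE da db => /eqP <-. Qed.

Lemma Eab_loopless a b h u v : 0 < a + b -> E a b h u v -> u != v.
Proof.
move=> ab_gt0 /Eab_dist duv; apply/eqP => uv.
by move: duv; rewrite uv dist_refl => -[ab0]; rewrite -ab0 in ab_gt0.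
Qed.

(* The key fact: if (u,v) and (u',v') are E^h_{a,b}-edges and (u,v') is an
   E^{h'}_{a,b}-edge, then h lies on a shortest u-v' path as well; as the
   colours on H_{uv'} are pairwise distinct, h' = h if chi h' = chi h. *)
Lemma Eab_same_colour a b h h' u v u' v' :
  E a b h u v -> E a b h u' v' -> E a b h' u v' -> chi h' = chi h -> h' = h.
Proof.
case/and5P=> _ _ _ /eqP dist_uh _ /and5P[_ _ _ _ /eqP dist_hv'] Eh'.
have /and5P[_ /forall_inP rainbow h'H _ _] := Eh'.
have hH : h \in Hset e u v' by rewrite inE (Eab_dist Eh') dist_uh dist_hv'.
by move=> same; apply/eqP; move/forall_inP: (rainbow _ h'H) => /(_ _ hH); rewrite same eqxx.
Qed.

End ShortestPathEdges.

Section ColourClasses.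
Variables (T : finType) (e : rel T) (D : nat) (chi : T -> nat) (a b : nat).
Hypothesis ab_gt0 : 0 < a + b.
Let E := Eab e D chi a b.

Definition colour_class_matching (c : nat) (h : T) : {set T * T} :=
  if chi h == c then max_bmatching (E h) else set0.

Lemma mem_colour_class_matching c h p :
  p \in colour_class_matching c h -> chi h = c /\ p \in max_bmatching (E h).
Proof. by rewrite /colour_class_matching; case: eqP => [|_]; rewrite ?inE. Qed.

(* Within a colour class the matchings form an induced family. *)
Lemma colour_class_le c : \sum_h #|colour_class_matching c h| <= 4 * rs_max #|T|.
Proof.
apply: matching_family_le_rs.
- move=> h p q /mem_colour_class_matching[_ pM] /mem_colour_class_matching[_ qM].
  exact: bmatching_inj (max_bmatchingP _) pM qM.
- move=> h h' p q r /mem_colour_class_matching[ch pM] /mem_colour_class_matching[_ qM].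
  case/mem_colour_class_matching=> ch' rM e1 e2.
  have edge s g (sM : s \in max_bmatching (E g)) := bmatching_edge (max_bmatchingP _) sM.
  apply: (Eab_same_colour (edge _ _ pM) (edge _ _ qM)); last by rewrite ch ch'.
  by case: r e1 e2 rM => r1 r2 /= -> -> /edge.
- by move=> h p /mem_colour_class_matching[_ /(bmatching_edge (max_bmatchingP _))];
    apply: Eab_loopless.
Qed.

(* Each centre h lies in exactly one of the K + 1 colour classes, so the
   bound per class sums to a bound over all centres. *)
Lemma sum_max_matching_le K : (forall x, chi x <= K) ->
  \sum_h #|max_bmatching (E h)| <= K.+1 * (4 * rs_max #|T|).
Proof.
move=> chi_le; rewrite -[K.+1]card_ord -sum_nat_const.
have split_colours h : #|max_bmatching (E h)| = \sum_(c < K.+1) #|colour_class_matching c h|.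
  rewrite (bigD1 (Ordinal (chi_le h : chi h < K.+1))) //= /colour_class_matching eqxx.
  rewrite big1 ?addn0 // => c /negbTE; rewrite -(inj_eq val_inj) /= eq_sym => ->.
  exact: cards0.
rewrite (eq_bigr _ (fun h _ => split_colours h)) exchange_big /=.
by apply: leq_sum => c _; apply: colour_class_le.
Qed.

End ColourClasses.

Section CoverCounting.
Variables (T : finType) (e : rel T) (D K : nat) (chi : T -> nat).
Hypothesis chi_le : forall x, chi x <= K.
Variable cover : nat -> nat -> T -> {set T} * {set T}.
Hypothesis cover_min : forall a b h, 1 <= a + b <= D ->
  is_min_vcover (Eab e D chi a b h) (cover a b h).

Let incident (a b : 'I_D.+1) h v : bool :=
  (1 <= a + b <= D) && (v \in (cover a b h).1 :|: (cover a b h).2).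

Lemma sum_covers_le (a b : 'I_D.+1) :
  \sum_h \sum_v incident a b h v <= 2 * (K.+1 * (4 * rs_max #|T|)).
Proof.
rewrite /incident; case: (boolP (1 <= a + b <= D)) => /= [ab_ok|_]; last first.
  by rewrite big1 // => h _; rewrite big1.
have /andP[ab_gt0 _] := ab_ok.
apply: leq_trans (_ : \sum_h 2 * #|max_bmatching (Eab e D chi a b h)| <= _).
  apply: leq_sum => h _; rewrite -card_count.
  rewrite (_ : [set v | _] = (cover a b h).1 :|: (cover a b h).2); last by apply/setP => v; rewrite inE.
  apply: leq_trans (min_vcover_le_matching (cover_min h ab_ok)).
  exact: (leq_card_setU _ _).1.
by rewrite -big_distrr leq_mul2l sum_max_matching_le.
Qed.

(* Every h in F_v is witnessed by some admissible (a, b), and each pair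
   (a, b) contributes the cover sizes bounded above. *)
Lemma sum_Fset_le :
  \sum_v #|Fset D cover v| <= D.+1 * (D.+1 * (2 * (K.+1 * (4 * rs_max #|T|)))).
Proof.
have Fv_le v : #|Fset D cover v| <= \sum_h \sum_a \sum_b incident a b h v.
  rewrite card_count; apply: leq_sum => h _.
  apply: leq_trans (exists_le_count _) _.
  by apply: leq_sum => a _; apply: exists_le_count.
apply: (@leq_trans (\sum_v \sum_h \sum_a \sum_b incident a b h v)).
  by apply: leq_sum => v _; apply: Fv_le.
rewrite exchange_big /=.
under eq_bigr do rewrite exchange_big /=; rewrite exchange_big /=.
under eq_bigr do under eq_bigr do rewrite exchange_big /=.
under eq_bigr do rewrite exchange_big /=.
apply: leq_trans (_ : _ <= \sum_(a < D.+1) \sum_(b < D.+1) 2 * (K.+1 * (4 * rs_max #|T|))) _.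
  by apply: leq_sum => a _; apply: leq_sum => b _; apply: sum_covers_le.
by rewrite !sum_nat_const !card_ord.
Qed.

End CoverCounting.

(* (D+1)^2 * 2 * (D^3+1) * 4 <= 64 D^5, using D + 1 <= 2 D and D^3 + 1 <= 2 D^3. *)
Lemma constant_le (D r : nat) : 1 <= D ->
  D.+1 * (D.+1 * (2 * ((D ^ 3).+1 * (4 * r)))) <= 64 * D ^ 5 * r.
Proof.
move=> D_gt0.
have D1_le : D.+1 <= 2 * D by rewrite mul2n -addnn -addn1 leq_add2l.
have D3_le : (D ^ 3).+1 <= 2 * D ^ 3 by rewrite mul2n -addnn -addn1 leq_add2l expn_gt0 D_gt0.
apply: (@leq_trans (2 * D * (2 * D * (2 * (2 * D ^ 3 * (4 * r)))))).
  by rewrite !leq_mul.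
have -> : D ^ 5 = D * (D * D ^ 3) by rewrite -!expnS.
set X := D ^ 3; clearbody X; nia.
Qed.

Import Order.TTheory GRing.Theory Num.Theory.
Local Open Scope ring_scope.

Lemma RS_ratio n : (0 < n)%N -> (n ^ 2)%:R / RS n = (rs_max n)%:R :> rat.
Proof.
move=> n_gt0; have n2_neq0 : (n ^ 2)%:R != 0 :> rat by rewrite pnatr_eq0 -lt0n expn_gt0 n_gt0.
by rewrite /RS invf_div mulrCA mulfV ?mulr1.
Qed.

Theorem lemma2 :
  exists C : rat,
  forall (T : finType) (e : rel T), symmetric e -> irreflexive e ->
  forall (D : nat), (1 <= D)%N ->
  forall (chi : T -> nat), (forall x, 1 <= chi x <= D ^ 3)%N ->
  forall (cover : nat -> nat -> T -> {set T} * {set T}),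
    (forall (a b : nat) (h : T), (1 <= a + b <= D)%N ->
        is_min_vcover (Eab e D chi a b h) (cover a b h)) ->
    (\sum_(v : T) #|Fset D cover v|)%:R
      <= C * (D ^ 5)%:R * ((#|T| ^ 2)%:R / RS #|T|).
Proof.
exists 64%:R => T e _ _ D D_gt0 chi chi_range cover cover_min.
have chi_le x : (chi x <= D ^ 3)%N by case/andP: (chi_range x).
have bound := leq_trans (sum_Fset_le chi_le cover_min) (constant_le (rs_max #|T|) D_gt0).
have [T0|T_gt0] := posnP #|T|.
  have -> : (\sum_v #|Fset D cover v|)%N = 0%N.
    by apply: big1 => v _; have := max_card (pred1 v); rewrite card1 T0.
  have RS_ge0 : 0 <= RS #|T| by apply: divr_ge0; apply: ler0n.
  by apply: mulr_ge0; [apply: mulr_ge0 | apply: divr_ge0]; rewrite ?ler0n.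
by rewrite (RS_ratio T_gt0) -!natrM ler_nat.
Qed.
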